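(* Let $n,c\geq 1$. A $\mathrm{MS}^0_{\mathbb Z_{2nc+1}^*}(2,n;n,2;c)$ (that is, a set of $c$ arrays of size $2\times n$ with no empty cells) exists if and only if $n\geq 3$.
   Context: For an abelian group $\Gamma$ and $\Omega\subseteq\Gamma$, a zero-sum magic partially filled array set $\mathrm{MS}^0_\Omega(m,n;s,k;c)$ is a set of $c$ partially filled $m\times n$ arrays (arrays where some cells may be empty) with entries in $\Omega$ such that every element of $\Omega$ appears exactly once in exactly one of the arrays, every array has exactly $s$ filled cells in each row and exactly $k$ in each column, and in every array each row and each column sums to $0_\Gamma$. $\mathbb Z_N$ is the cyclic group of order $N$ and $\mathbb Z_N^*=\mathbb Z_N\setminus\{0\}$. *)

From mathcomp Require Import all_boot all_order all_algebra.
Set Implicit Arguments. Unset Strict Implicit. Unset Printing Implicit Defensive.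
Import GRing.Theory.
Local Open Scope ring_scope.

(* A partially filled m x n array with entries in G: empty cell = None. *)
Definition pfarray (G : Type) (m n : nat) := 'I_m -> 'I_n -> option G.

Definition is_MS0 (G : finZmodType) (Omega : {set G}) (m n s k c : nat)
    (A : 'I_c -> pfarray G m n) : Prop :=
  (forall a i j x, A a i j = Some x -> x \in Omega) /\
      (forall x, x \in Omega ->
         #|[set t : 'I_c * 'I_m * 'I_n | A t.1.1 t.1.2 t.2 == Some x]| = 1%N) /\
      (forall a i, #|[set j : 'I_n | A a i j != None]| = s) /\
      (forall a j, #|[set i : 'I_m | A a i j != None]| = k) /\
      (forall a i, \sum_(j < n) odflt 0 (A a i j) = 0) /\
      (forall a j, \sum_(i < m) odflt 0 (A a i j) = 0).

Definition MS0_exists (G : finZmodType) (Omega : {set G}) (m n s k c : nat) : Prop :=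
  exists A : 'I_c -> pfarray G m n, is_MS0 Omega s k A.

(* For n = 1
   a row is a single entry, which must be 0; for n = 2 the first row and the
   first column force the two off-diagonal entries to coincide.
   Conversely, it suffices to choose for every array a first row e of zero sum
   and to take -e as second row: the columns then vanish, and the c first rows
   must contain exactly one of x, -x for each nonzero x of Z_N, N = 2nc + 1.
   These rows are built over the integers, with absolute values running through
   1..nc and row sums in {0, N, -N}.  For n = 3 the pairs (x, y) of a Skolem or
   hooked Skolem sequence of order c give the rows (y - x, c + x, -(c + y)).
   For n >= 4, column j runs through the band jc + 1, ..., jc + c, with signs
   repeating in blocks of four columns that add the same amount to every row,
   and one or two special columns, depending on n mod 4, bring the row sums to
   0 or +-N. *)

From mathcomp Require Import all_boot all_order all_algebra zify.

Set Implicit Arguments.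
Unset Strict Implicit.
Unset Printing Implicit Defensive.

Import GRing.Theory Num.Theory.

Section Filled.
Local Open Scope ring_scope.
Variables (G : finZmodType) (Omega : {set G}).

Lemma MS0_filled m n k c (A : 'I_c -> pfarray G m n) a i j :
  is_MS0 Omega n k A -> A a i j != None.
Proof.
case=> _ [_ [rows _]].
have: [set j | A a i j != None] = setT.
  by apply/eqP; rewrite eqEcard subsetT cardsT card_ord rows leqnn.
by move/setP/(_ j); rewrite !inE.
Qed.

Lemma no_MS0_1col m k c :
  0 \notin Omega -> (0 < m)%N -> (0 < c)%N -> ~ MS0_exists Omega m 1 1 k c.
Proof.
move=> Omega0 m_gt0 c_gt0 [A MS]; have [inO [_ [_ [_ [rsum _]]]]] := MS.
pose a := Ordinal c_gt0; pose i := Ordinal m_gt0.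
case Aij: (A a i ord0) (MS0_filled a i ord0 MS) => [x|] // _.
have:= rsum a i; rewrite big_ord1 Aij /= => x0.
by move: (inO _ _ _ _ Aij); rewrite x0 (negPf Omega0).
Qed.

Lemma no_MS0_2x2 k c : (0 < c)%N -> ~ MS0_exists Omega 2 2 2 k c.
Proof.
move=> c_gt0 [A MS]; have [inO [once [_ [_ [rsum csum]]]]] := MS.
pose a := Ordinal c_gt0.
have sum2 (f : 'I_2 -> G) : \sum_(i < 2) f i = f 0 + f 1.
  by rewrite big_ord_recl big_ord1; congr (_ + f _); apply: val_inj.
case A00: (A a 0 0) (MS0_filled a 0 0 MS) => [w|] // _.
case A01: (A a 0 1) (MS0_filled a 0 1 MS) => [x|] // _.
case A10: (A a 1 0) (MS0_filled a 1 0 MS) => [y|] // _.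
have wx : w + x = 0 by have:= rsum a 0; rewrite sum2 A00 A01.
have wy : w + y = 0 by have:= csum a 0; rewrite sum2 A00 A10.
have yx : y = x by apply: (addrI w); rewrite wx wy.
have: (1 < #|[set t | A t.1.1 t.1.2 t.2 == Some x]|)%N.
  apply: leq_trans (subset_leq_card (_ : [set (a, 0, 1); (a, 1, 0)] \subset _)).
    by rewrite cards2.
  by apply/subsetP => t; rewrite !inE => /orP[] /eqP ->; rewrite /= ?A01 ?A10 ?yx.
by rewrite once // (inO _ _ _ _ A01).
Qed.

End Filled.

Section HalfArrays.
Local Open Scope ring_scope.
Variables (G : finZmodType) (n c : nat).

Lemma MS0_of_half_set (e : 'I_c -> 'I_n -> G) :
  #|G| = (2 * n * c).+1 ->
  injective (fun t : 'I_c * 'I_n => e t.1 t.2) ->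
  (forall a j a' j', e a j != - e a' j') ->
  (forall a, \sum_(j < n) e a j = 0) ->
  MS0_exists [set x : G | x != 0] 2 n n 2 c.
Proof.
move=> cardG e_inj e_opp e_sum.
pose f (t : 'I_c * 'I_2 * 'I_n) := if val t.1.2 == 0%N then e t.1.1 t.2 else - e t.1.1 t.2.
exists (fun a i j => Some (f (a, i, j))).
have f_neq0 t : f t != 0.
  have e_neq0 a j : e a j != 0 by apply: contraNneq (e_opp a j a j) => ->; rewrite oppr0.
  by rewrite /f; case: ifP; rewrite ?oppr_eq0 e_neq0.
have f_inj : injective f.
  move=> [[a i] j] [[a' i'] j']; rewrite /f /=.
  case: i => [[|[|//]] ?]; case: i' => [[|[|//]] ?] /=.
  - by move/(e_inj (a, j) (a', j')) => [-> ->]; congr (_, _, _); apply: val_inj.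
  - by move=> eq; have:= e_opp a j a' j'; rewrite eq eqxx.
  - by move=> eq; have:= e_opp a' j' a j; rewrite -eq eqxx.
  - by move/oppr_inj/(e_inj (a, j) (a', j')) => [-> ->]; congr (_, _, _); apply: val_inj.
have f_onto : f @: setT = [set x : G | x != 0].
  apply/eqP; rewrite eqEcard; apply/andP; split.
    by apply/subsetP => _ /imsetP[t _ ->]; rewrite inE f_neq0.
  rewrite card_imset // cardsT !card_prod !card_ord.
  rewrite (_ : [set x : G | x != 0] = [set~ 0]); last by apply/setP => x; rewrite !inE.
  by rewrite cardsC1 cardG; lia.
split; [|split; [|split; [|split; [|split]]]].
- by move=> a i j x [<-]; rewrite inE f_neq0.
- move=> x; rewrite -f_onto => /imsetP[t0 _ ->].
  suff -> : [set t | Some (f (t.1.1, t.1.2, t.2)) == Some (f t0)] = [set t0] by rewrite cards1.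
  apply/setP => t; rewrite !inE.
  by case: t => [[a i] j] /=; apply/eqP/eqP => [[/f_inj] | ->].
- by move=> a i; rewrite -[RHS]card_ord -cardsT; congr #|_|; apply/setP => j; rewrite !inE.
- by move=> a j; rewrite -[RHS]card_ord -cardsT; congr #|_|; apply/setP => i; rewrite !inE.
- move=> a [[|[|//]] ?]; rewrite /f /=; first exact: e_sum.
  by rewrite sumrN e_sum oppr0.
- by move=> a j; rewrite big_ord_recl big_ord1 /f /= addrN.
Qed.
End HalfArrays.

Section IntegerHalfArrays.
Local Open Scope ring_scope.

Lemma Zp_intr_eq0 (N : nat) (z : int) :
  (1 < N)%N -> ((z%:~R : 'Z_N) == 0) = (N%:Z %| z)%Z.
Proof.
move=> N_gt1; have Zp_nat_eq0 m : ((m%:R : 'Z_N) == 0) = (N %| m)%N.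
  by rewrite Zp_nat /dvdn -(inj_eq val_inj) /= Zp_cast.
by rewrite dvdzE /=; case: z => m; rewrite ?NegzE ?mulrNz ?oppr_eq0 -pmulrn Zp_nat_eq0.
Qed.

Lemma Zp_intr_inj (N : nat) (x y : int) :
  (1 < N)%N -> (`|x - y| < N)%N -> (x%:~R : 'Z_N) = y%:~R -> x = y.
Proof.
move=> N_gt1 small /eqP; rewrite -subr_eq0 -intrB Zp_intr_eq0 // dvdzE /=.
have [xy0 | nz] := eqVneq (x - y) 0; first by move=> _; apply/eqP; rewrite -subr_eq0 xy0.
by move/dvdn_leq; rewrite absz_gt0 nz leqNgt small => /(_ isT).
Qed.

Lemma dvdz_zero_or_abs (N : nat) (s : int) : s = 0 \/ `|s|%N = N -> (N%:Z %| s)%Z.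
Proof. by case=> [-> | abs_s]; rewrite ?dvdz0 // dvdzE /= abs_s. Qed.

Variables (n c : nat) (T : nat -> nat -> int).
Hypotheses (n_gt0 : (0 < n)%N) (c_gt0 : (0 < c)%N).
Hypothesis T_range : forall a j, (a < c)%N -> (j < n)%N -> (0 < `|T a j| <= n * c)%N.
Hypothesis T_inj : forall a j a' j', (a < c)%N -> (j < n)%N -> (a' < c)%N -> (j' < n)%N ->
  `|T a j|%N = `|T a' j'|%N -> a = a' /\ j = j'.
Hypothesis T_sum : forall a, (a < c)%N -> ((2 * n * c + 1)%:Z %| \sum_(0 <= j < n) T a j)%Z.

Lemma MS0_of_int_half_set : MS0_exists [set x : 'Z_(2 * n * c + 1) | x != 0] 2 n n 2 c.
Proof.
have N_gt1 : (1 < 2 * n * c + 1)%N by rewrite addn1 ltnS !muln_gt0 n_gt0.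
pose e (a : 'I_c) (j : 'I_n) : 'Z_(2 * n * c + 1) := (T a j)%:~R.
have Tb (a : 'I_c) (j : 'I_n) := T_range (ltn_ord a) (ltn_ord j).
have same_cell (a a' : 'I_c) (j j' : 'I_n) : `|T a j|%N = `|T a' j'|%N -> a = a' /\ j = j'.
  by move/(T_inj (ltn_ord a) (ltn_ord j) (ltn_ord a') (ltn_ord j')) => [? ?]; split; apply: val_inj.
apply: (@MS0_of_half_set _ n c e).
- by rewrite card_ord Zp_cast //; lia.
- move=> [a j] [a' j'] /= /Zp_intr_inj eqT.
  have {eqT} eqT : T a j = T a' j' by apply: eqT => //; have := Tb a j; have := Tb a' j'; lia.
  by have [-> ->] := same_cell _ _ _ _ (congr1 absz eqT).
- move=> a j a' j'; apply/eqP; rewrite -mulrNz => /Zp_intr_inj eqT.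
  have {eqT} eqT : T a j = - T a' j' by apply: eqT => //; have := Tb a j; have := Tb a' j'; lia.
  have [aa' jj'] := same_cell _ _ _ _ (etrans (congr1 absz eqT) (abszN _)).
  by move: eqT (Tb a j); rewrite aa' jj'; lia.
- move=> a; apply/eqP; rewrite -(big_morph _ (@intrD _) (mulr0z 1)) Zp_intr_eq0 //.
  by rewrite -(big_mkord xpredT (T a)) T_sum.
Qed.
End IntegerHalfArrays.

(* [p a = (x, y)] holds the two positions of the symbol [y - x] in a Skolem
   sequence of order [c] (positions [1..2c]) or in a hooked one (positions
   [1..2c+1], position [2c] left empty). *)
Record skolem_pairs (c : nat) (p : nat -> nat * nat) : Prop := SkolemPairs {
  skolem_pos : forall a, a < c -> 0 < (p a).1 < (p a).2;
  skolem_span : forall a, a < c -> (p a).2 <= (p a).1 + c;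
  skolem_bound : forall a, a < c -> (p a).2 <= 2 * c + 1;
  skolem_span_inj : forall a b, a < c -> b < c ->
    (p a).2 - (p a).1 = (p b).2 - (p b).1 -> a = b;
  skolem_fst_inj : forall a b, a < c -> b < c -> (p a).1 = (p b).1 -> a = b;
  skolem_snd_inj : forall a b, a < c -> b < c -> (p a).2 = (p b).2 -> a = b;
  skolem_fst_snd : forall a b, a < c -> b < c -> (p a).1 <> (p b).2;
  skolem_hook : forall a b, a < c -> b < c ->
    (p a).2 = 2 * c + 1 -> (p b).1 <> 2 * c /\ (p b).2 <> 2 * c }.

(* In a hooked row [y = 2c + 1]; its last entry [3c] is free because position
   [2c] is empty, and the row sums to [6c + 1]. *)
Definition skolem_row (c : nat) (p : nat -> nat * nat) (a j : nat) : int :=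
  match j with
  | 0 => Posz ((p a).2 - (p a).1)
  | 1 => Posz (c + (p a).1)
  | _ => if (p a).2 == 2 * c + 1 then Posz (3 * c) else (- Posz (c + (p a).2))%R
  end.

Lemma MS0_2x3_of_skolem c p : 0 < c -> skolem_pairs c p ->
  MS0_exists [set x : 'Z_(2 * 3 * c + 1) | x != 0%R] 2 3 3 2 c.
Proof.
move=> c_gt0 [pos span bound span_inj fst_inj snd_inj fst_snd hook].
apply: (@MS0_of_int_half_set 3 c (skolem_row c p)) => //.
- move=> a j Ha Hj; move: (pos a Ha) (span a Ha) (bound a Ha).
  by case: j Hj => [|[|[|//]]] _ /=; do ?case: ifP; lia.
- move=> a j b j' Ha Hj Hb Hj'.
  move: (pos a Ha) (span a Ha) (bound a Ha) (pos b Hb) (span b Hb) (bound b Hb).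
  case: j Hj => [|[|[|//]]] _; case: j' Hj' => [|[|[|//]]] _ /=.
  + by move=> *; split=> //; apply: span_inj => //; lia.
  + lia.
  + by case: eqP; lia.
  + lia.
  + by move=> *; split=> //; apply: fst_inj => //; lia.
  + case: eqP => [/(hook b a Hb Ha) | _]; first lia.
    by move=> *; exfalso; apply: (fst_snd a b Ha Hb); lia.
  + by case: eqP; lia.
  + case: eqP => [/(hook a b Ha Hb) | _]; first lia.
    by move=> *; exfalso; apply: (fst_snd b a Hb Ha); lia.
  + case: eqP => [/[dup] /(hook a b Ha Hb) | _]; case: eqP => [/[dup] /(hook b a Hb Ha) | _].
    * by move=> *; split=> //; apply: snd_inj => //; lia.
    * lia.
    * lia.
    * by move=> *; split=> //; apply: snd_inj => //; lia.
- move=> a Ha; move: (pos a Ha) (bound a Ha).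
  rewrite !big_nat_recr //= big_geq // /skolem_row.
  by case: eqP => * /=; apply: dvdz_zero_or_abs; lia.
Qed.

(* Premises stay in the goal, so that [case: ifP] also splits the pairs there. *)
Ltac skolem_lia :=
  constructor;
  match goal with
  | |- forall a b : nat, _ => move=> a b ? ?
  | |- forall a : nat, _ => move=> a ?
  end; rewrite /=; repeat (case: ifP => /= ?); lia.

(* Skolem sequences exist for orders 0, 1 mod 4, hooked ones for orders 2, 3
   mod 4. *)
Definition skolem4 (s a : nat) : nat * nat :=
  if a < 2 * s then (4 * s + a, 8 * s - a)
  else if a < 3 * s - 2 then (a - 2 * s + 1, 6 * s - 2 - a)
  else if a < 4 * s - 4 then (a - 2 * s + 4, 6 * s - 3 - a)
  else if a == 4 * s - 4 then (s, s + 1)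
  else if a == 4 * s - 3 then (s - 1, 3 * s)
  else if a == 4 * s - 2 then (2 * s + 1, 6 * s)
  else (2 * s, 4 * s - 1).

Lemma skolem4P s : 2 <= s -> skolem_pairs (4 * s) (skolem4 s).
Proof. by rewrite /skolem4; skolem_lia. Qed.

Definition skolem4_1 (s a : nat) : nat * nat :=
  if a < 2 * s then (4 * s + 2 + a, 8 * s + 2 - a)
  else if a == 2 * s then (2 * s + 1, 6 * s + 2)
  else if a < 3 * s + 1 then (a - 2 * s, 6 * s + 1 - a)
  else if a == 3 * s + 1 then (s + 1, s + 2)
  else if a == 3 * s + 2 then (2 * s + 2, 4 * s + 1)
  else (a - 2 * s, 6 * s + 3 - a).

Lemma skolem4_1P s : 2 <= s -> skolem_pairs (4 * s + 1) (skolem4_1 s).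
Proof. by rewrite /skolem4_1; skolem_lia. Qed.

Definition hooked4_2 (s a : nat) : nat * nat :=
  if a < 2 * s then (a + 1, 4 * s + 1 - a)
  else if a == 2 * s then (2 * s + 1, 6 * s + 3)
  else if a < 3 * s + 1 then (2 * s + 1 + a, 10 * s + 4 - a)
  else if a == 3 * s + 1 then (6 * s + 4, 8 * s + 5)
  else if a == 3 * s + 2 then (5 * s + 2, 5 * s + 3)
  else (2 * s + 1 + a, 10 * s + 6 - a).

Lemma hooked4_2P s : 1 <= s -> skolem_pairs (4 * s + 2) (hooked4_2 s).
Proof. by rewrite /hooked4_2; skolem_lia. Qed.

Definition hooked4_3 (s a : nat) : nat * nat :=
  if a < 2 * s + 1 then (a + 1, 4 * s + 3 - a)
  else if a == 2 * s + 1 then (2 * s + 2, 6 * s + 5)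
  else if a < 3 * s + 2 then (2 * s + 2 + a, 10 * s + 7 - a)
  else if a == 3 * s + 2 then (6 * s + 6, 8 * s + 7)
  else if a == 3 * s + 3 then (5 * s + 4, 5 * s + 5)
  else (2 * s + 2 + a, 10 * s + 9 - a).

Lemma hooked4_3P s : 1 <= s -> skolem_pairs (4 * s + 3) (hooked4_3 s).
Proof. by rewrite /hooked4_3; skolem_lia. Qed.

Definition small_skolem (c a : nat) : nat * nat :=
  match c with
  | 1 => (1, 2)
  | 2 => if a == 0 then (1, 2) else (3, 5)
  | 3 => if a == 0 then (2, 3) else if a == 1 then (1, 4) else (5, 7)
  | 4 => if a == 0 then (1, 2) else if a == 1 then (5, 7) else if a == 2 then (3, 6)
         else (4, 8)
  | _ => if a == 0 then (9, 10) else if a == 1 then (2, 4) else if a == 2 then (5, 8)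
         else if a == 3 then (3, 7) else (1, 6)
  end.

Lemma small_skolemP c : 0 < c <= 5 -> skolem_pairs c (small_skolem c).
Proof. by case: c => [|[|[|[|[|[|c]]]]]] //= _; skolem_lia. Qed.

Lemma skolem_pairs_exist c : 0 < c -> exists p, skolem_pairs c p.
Proof.
move=> c_gt0; have [small | large] := leqP c 5.
  by exists (small_skolem c); apply: small_skolemP; rewrite c_gt0.
have [s [c_eq|[c_eq|[c_eq|c_eq]]]] : exists s,
    c = 4 * s \/ c = 4 * s + 1 \/ c = 4 * s + 2 \/ c = 4 * s + 3.
  by exists (c %/ 4); lia.
- by rewrite c_eq; exists (skolem4 s); apply: skolem4P; lia.
- by rewrite c_eq; exists (skolem4_1 s); apply: skolem4_1P; lia.
- by rewrite c_eq; exists (hooked4_2 s); apply: hooked4_2P; lia.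
- by rewrite c_eq; exists (hooked4_3 s); apply: hooked4_3P; lia.
Qed.

Definition signed (neg : bool) (m : nat) : int := if neg then (- Posz m)%R else Posz m.

Lemma abs_signed neg m : `|signed neg m| = m.
Proof. by case: neg; rewrite /= ?abszN. Qed.

(* A [Zigzag] column runs through its band as [jc + 2c - 1 - 2a] and
   [jc + 2a + 2]; its signed entry is [K - 2a] or [K - 2a - (2(j + 1)c + 1)]
   with [K = jc + 2c - 1].  In the last column [j = n - 1] it therefore cancels,
   modulo [N = 2nc + 1], a term [2a] left by the other columns. *)
Inductive column := Plain of bool | Rev of bool | Zigzag.

Section Bands.
Variable c : nat.

Definition offset (k : column) (a : nat) : nat :=
  match k with
  | Plain _ => a.+1
  | Rev _ => c - a
  | Zigzag => if c - 1 <= 2 * a then 2 * c - 1 - 2 * a else 2 * a + 2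
  end.

Definition negative (k : column) (a : nat) : bool :=
  match k with
  | Plain neg | Rev neg => neg
  | Zigzag => 2 * a < c - 1
  end.

Definition band_entry (k : column) (j a : nat) : int :=
  signed (negative k a) (j * c + offset k a).

Lemma offset_range k a : a < c -> 0 < offset k a <= c.
Proof. by case: k => [?|?|] /=; try case: ifP; lia. Qed.

Lemma offset_inj k a b : a < c -> b < c -> offset k a = offset k b -> a = b.
Proof. by case: k => [?|?|] /=; try (case: ifP; case: ifP); lia. Qed.

Lemma band_eq j j' u u' : 0 < u <= c -> 0 < u' <= c ->
  j * c + u = j' * c + u' -> j = j' /\ u = u'.
Proof.
move=> u_range u'_range eq_ju.
suff jj' : j = j' by split=> //; move: eq_ju; rewrite jj'; lia.
have [lt | gt | //] := ltngtP j j'.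
  have : j.+1 * c <= j' * c by rewrite leq_mul2r lt orbT.
  by rewrite mulSn; lia.
have : j'.+1 * c <= j * c by rewrite leq_mul2r gt orbT.
by rewrite mulSn; lia.
Qed.

Lemma MS0_of_band n (col : nat -> column) : 0 < n -> 0 < c ->
  (forall a, a < c -> ((2 * n * c + 1)%:Z %| (\sum_(0 <= j < n) band_entry (col j) j a)%R)%Z) ->
  MS0_exists [set x : 'Z_(2 * n * c + 1) | x != 0%R] 2 n n 2 c.
Proof.
move=> n_gt0 c_gt0 row_sum.
apply: (@MS0_of_int_half_set n c (fun a j => band_entry (col j) j a)) => //.
- move=> a j Ha Hj; rewrite abs_signed.
  have := offset_range (col j) Ha; have : j.+1 * c <= n * c by rewrite leq_mul2r Hj orbT.
  rewrite mulSn; lia.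
- move=> a j b j' Ha Hj Hb Hj'; rewrite !abs_signed.
  move/band_eq => /(_ (offset_range _ Ha) (offset_range _ Hb)) [jj' eq_off].
  by split=> //; move: eq_off; rewrite jj'; apply: offset_inj.
Qed.

End Bands.

Lemma sum_blocks4 (f : nat -> int) b m (G : int) :
  (forall i, i < m -> (f (b + 4 * i)%N + f (b + 4 * i + 1)%N + f (b + 4 * i + 2)%N
                       + f (b + 4 * i + 3)%N = G)%R) ->
  (\sum_(b <= j < b + 4 * m) f j)%R = (G *+ m)%R.
Proof.
have sum4 k : (\sum_(k <= j < k + 4) f j = f k + f (k + 1)%N + f (k + 2)%N + f (k + 3)%N)%R.
  by rewrite /index_iota addKn !big_cons big_nil addn1 addn2 addn3 !addrA addr0.
elim: m => [|m IH] blocks; first by rewrite muln0 addn0 big_geq.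
rewrite (big_cat_nat _ (n := b + 4 * m)) ?leq_addr //=; last by lia.
rewrite IH => [|i lt_im]; last by apply: blocks; lia.
by rewrite mulnSr addnA sum4 blocks ?mulrSr.
Qed.

Lemma big_nat_split3 (f : nat -> int) h m t n : n = h + 4 * m + t ->
  (\sum_(0 <= j < n) f j = \sum_(0 <= j < h) f j + \sum_(h <= j < h + 4 * m) f j
                          + \sum_(h + 4 * m <= j < h + 4 * m + t) f j)%R.
Proof. by move=> ->; rewrite -!big_cat_nat ?leq_addr. Qed.

Ltac unfold_short_sums := rewrite /index_iota ?subn0 ?addKn /= !big_cons big_nil.
(* Column kinds are decided first, so that the signs become closed booleans. *)
Ltac band_lia :=
  rewrite /band_entry /=; repeat (case: ifP => ? /=; try (exfalso; lia));
  rewrite /signed /=; repeat (case: ifP => ? /=; try (exfalso; lia)); lia.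

Section BandSums.
Variable c : nat.
Local Notation entry := (band_entry c).

Definition band_pattern0 (j : nat) : column := Plain ((j %% 4 == 1) || (j %% 4 == 2)).

Lemma band_sum_mod0 m a : (\sum_(0 <= j < 4 * m) entry (band_pattern0 j) j a)%R = 0%R.
Proof.
rewrite -(add0n (4 * m)) (@sum_blocks4 _ 0 m 0) ?mul0rn // => i _.
rewrite /band_pattern0; band_lia.
Qed.

Definition band_pattern1 (n j : nat) : column :=
  if j == n - 1 then Zigzag else if j < 4 then Plain (j == 1) else Plain (j %% 4 < 2).

Lemma band_sum_mod1 m a : a < c ->
  (\sum_(0 <= j < 5 + 4 * m) entry (band_pattern1 (5 + 4 * m) j) j a)%R =
  if c - 1 <= 2 * a then Posz (2 * (5 + 4 * m) * c + 1) else 0%R.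
Proof.
move=> Ha; rewrite (@big_nat_split3 _ 4 m 1); last by lia.
rewrite (@sum_blocks4 _ 4 m (Posz (4 * c))); last first.
  by move=> i lt_im; rewrite /band_pattern1; band_lia.
unfold_short_sums; rewrite /band_pattern1; band_lia.
Qed.

Definition band_pattern2 (n j : nat) : column :=
  if j == n - 1 then Plain false else if j == n - 2 then Rev false
  else if j < 4 then Plain (~~ odd j) else band_pattern0 j.

Lemma band_sum_mod2 m a : a < c ->
  (\sum_(0 <= j < 6 + 4 * m) entry (band_pattern2 (6 + 4 * m) j) j a)%R =
  Posz (2 * (6 + 4 * m) * c + 1).
Proof.
move=> Ha; rewrite (@big_nat_split3 _ 4 m 2); last by lia.
rewrite (@sum_blocks4 _ 4 m 0); last first.
  by move=> i lt_im; rewrite /band_pattern2 /band_pattern0; band_lia.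
unfold_short_sums; rewrite /band_pattern2; band_lia.
Qed.

Definition band_pattern3 (n j : nat) : column :=
  if j == n - 1 then Zigzag else if j == 5 then Rev true
  else if j < 6 then Plain ((j == 2) || (j == 4)) else Plain (j %% 4 < 2).

Lemma band_sum_mod3 m a : a < c ->
  (\sum_(0 <= j < 7 + 4 * m) entry (band_pattern3 (7 + 4 * m) j) j a)%R =
  if c - 1 <= 2 * a then 0%R else (- Posz (2 * (7 + 4 * m) * c + 1))%R.
Proof.
move=> Ha; rewrite (@big_nat_split3 _ 6 m 1); last by lia.
rewrite (@sum_blocks4 _ 6 m (- Posz (4 * c))%R); last first.
  by move=> i lt_im; rewrite /band_pattern3; band_lia.
unfold_short_sums; rewrite /band_pattern3; band_lia.
Qed.

End BandSums.

Lemma MS0_2xn_ge4 n c : 4 <= n -> 0 < c ->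
  MS0_exists [set x : 'Z_(2 * n * c + 1) | x != 0%R] 2 n n 2 c.
Proof.
move=> n_ge4 c_gt0.
have [m [->|[->|[->|->]]]] : exists m,
    n = 4 * m.+1 \/ n = 5 + 4 * m \/ n = 6 + 4 * m \/ n = 7 + 4 * m.
  by exists ((n - 4) %/ 4); lia.
- apply: (@MS0_of_band c _ band_pattern0) => // a _.
  by rewrite band_sum_mod0; apply: dvdz_zero_or_abs; left.
- apply: (@MS0_of_band c _ (band_pattern1 (5 + 4 * m))) => // a Ha.
  by rewrite band_sum_mod1 //; apply: dvdz_zero_or_abs; case: ifP; lia.
- apply: (@MS0_of_band c _ (band_pattern2 (6 + 4 * m))) => // a Ha.
  by rewrite band_sum_mod2 //; apply: dvdz_zero_or_abs; lia.
- apply: (@MS0_of_band c _ (band_pattern3 (7 + 4 * m))) => // a Ha.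
  by rewrite band_sum_mod3 //; apply: dvdz_zero_or_abs; case: ifP; lia.
Qed.

Local Open Scope ring_scope.

Theorem mainTheorem14 (n c : nat) :
  (1 <= n)%N -> (1 <= c)%N ->
  (MS0_exists [set x : 'Z_(2 * n * c + 1) | x != 0] 2 n n 2 c <-> (3 <= n)%N).
Proof.
move=> n_gt0 c_gt0; split=> [MS | n_ge3].
- rewrite leqNgt; apply/negP => n_lt3.
  have [n1 | n2] : n = 1%N \/ n = 2%N by lia.
  + by move: MS; rewrite n1; apply: no_MS0_1col; rewrite ?inE ?eqxx.
  + by move: MS; rewrite n2; apply: no_MS0_2x2.
- have [n3 | n_ge4] : n = 3%N \/ (4 <= n)%N by lia.
  + have [p skolem_p] := skolem_pairs_exist c_gt0.
    by rewrite n3; apply: MS0_2x3_of_skolem skolem_p.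
  + exact: MS0_2xn_ge4.
Qed.
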